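(* In the kernel LSTD setting described in the context, the estimate $\widehat\theta$ takes the form $$\widehat\theta=r+\frac{1}{\sqrt{n-K}}\sum_{t=1}^{n-K}\widehat\alpha_t\,\mathcal{K}(\cdot,x_t),$$ where the coefficient vector $\widehat\alpha\in\mathbb{R}^{\tilde n}$ ($\tilde n=n-K$) solves the linear system $$\big(\mathbf{K}_{\rm cov}+\lambda_n\mathbf{I}_{\tilde n}-\mathbf{K}_{\rm cr}\big)\widehat\alpha=\mathbf{y},$$ with $\mathbf{K}_{\rm cov}(i,j)=\mathcal{K}(x_i,x_j)/\tilde n$, $\mathbf{K}_{\rm cr}(i,j)=\sum_{k=1}^Kw_k\gamma^k\mathcal{K}(x_{i+k},x_j)/\tilde n$, and $\mathbf{y}(i)=\frac{1}{\sqrt{\tilde n}}\sum_{k=1}^Kw_k\sum_{\ell=1}^k\gamma^\ell r(x_{i+\ell})$, for $i,j=1,\dots,\tilde n$.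
   Context: $\mathbb{H}$ is an RKHS of functions on a state space $\mathcal{X}$ with kernel $\mathcal{K}$, containing the reward function $r$; $\mathcal{R}_x=\mathcal{K}(\cdot,x)$ and $g\otimes h$ is the operator $f\mapsto g\langle h,f\rangle_{\mathbb{H}}$. Given $\gamma\in[0,1)$, an integer $K\ge1$, weights $w_1,\dots,w_K\ge0$ summing to $1$, a sequence of states $x_1,\dots,x_n$ ($n>K$), $\tilde n=n-K$, define $\widehat\Sigma_{\rm cov}=\frac1{\tilde n}\sum_{t=1}^{\tilde n}\mathcal{R}_{x_t}\otimes\mathcal{R}_{x_t}$, $\widehat\Sigma_{\rm cr}=\frac1{\tilde n}\sum_{t=1}^{\tilde n}\mathcal{R}_{x_t}\otimes\sum_{k=1}^Kw_k\gamma^k\mathcal{R}_{x_{t+k}}$, $\widehat y_0=\frac1{\tilde n}\sum_{t=1}^{\tilde n}\mathcal{R}_{x_t}\sum_{k=1}^Kw_k\sum_{\ell=1}^{k-1}\gamma^\ell r(x_{t+\ell})$. For $\lambda_n>0$ the kernel LSTD estimate $\widehat\theta\in\mathbb{H}$ is the solution of $(\widehat\Sigma_{\rm cov}+\lambda_nI)\widehat\theta=(\widehat\Sigma_{\rm cov}+\lambda_nI)r+\widehat y_0+\widehat\Sigma_{\rm cr}\widehat\theta$. *)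

From HB Require Import structures.
From mathcomp Require Import all_boot all_order all_algebra.
From mathcomp Require Import reals.
Set Implicit Arguments. Unset Strict Implicit. Unset Printing Implicit Defensive.
Import Order.TTheory GRing.Theory Num.Theory.
Local Open Scope ring_scope.

(* A reproducing kernel Hilbert space H of real functions on X:
   H is a real vector space, [ip] a symmetric, bilinear, positive definite
   inner product, [ev f x] = f(x) (evaluation, injective so elements of H
   are functions), and [feat x] = R_x = K(.,x) the representer of evaluation. *)
Record rkhs (R : realType) (X : Type) (H : lmodType R) := RKHS {
  ip : H -> H -> R;
  ev : H -> X -> R;
  feat : X -> H;
  ip_sym : forall f g, ip f g = ip g f;
  ip_linear : forall (a : R) f g h, ip (a *: f + g) h = a * ip f h + ip g h;
  ip_pos : forall f, f != 0 -> 0 < ip f f;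
  ev_linear : forall (a : R) f g x, ev (a *: f + g) x = a * ev f x + ev g x;
  ev_inj : injective ev;
  reproducing : forall x f, ip (feat x) f = ev f x
}.

Arguments rkhs : clear implicits.

Section LSTD.
Variables (R : realType) (X : Type) (H : lmodType R) (S : rkhs R X H).

Definition kern (a b : X) : R := ip S (feat S a) (feat S b).

Definition tens (g h f : H) : H := ip S h f *: g.

Variables (gamma : R) (K : nat) (w : nat -> R) (x : nat -> X) (m : nat).
(* m plays the role of n~ = n - K; states are x_1, ..., x_n (1-based). *)

Definition Sigma_cov (f : H) : H :=
  (m%:R)^-1 *: \sum_(1 <= t < m.+1) tens (feat S (x t)) (feat S (x t)) f.

Definition Sigma_cr (f : H) : H :=
  (m%:R)^-1 *: \sum_(1 <= t < m.+1)
     tens (feat S (x t))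
          (\sum_(1 <= k < K.+1) (w k * gamma ^+ k) *: feat S (x (t + k))%N) f.

Definition y0 (r : H) : H :=
  (m%:R)^-1 *: \sum_(1 <= t < m.+1)
     (\sum_(1 <= k < K.+1) w k *
        \sum_(1 <= l < k) gamma ^+ l * ev S r (x (t + l))%N) *: feat S (x t).

Definition lstd_eq (lam : R) (r theta : H) : Prop :=
  Sigma_cov theta + lam *: theta =
  Sigma_cov r + lam *: r + y0 r + Sigma_cr theta.

(* Matrices indexed by 'I_m; index i : 'I_m corresponds to time i+1. *)
Definition Kcov : 'M[R]_m :=
  \matrix_(i < m, j < m) (kern (x i.+1) (x j.+1) / m%:R).

Definition Kcr : 'M[R]_m :=
  \matrix_(i < m, j < m)
    ((\sum_(1 <= k < K.+1) w k * gamma ^+ k * kern (x (i.+1 + k))%N (x j.+1))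
       / m%:R).

Definition yvec (r : H) : 'cV[R]_m :=
  \col_(i < m) ((Num.sqrt (m%:R))^-1 *
     \sum_(1 <= k < K.+1) w k *
        \sum_(1 <= l < k.+1) gamma ^+ l * ev S r (x (i.+1 + l))%N).

Definition repr_form (r : H) (alpha : 'cV[R]_m) : H :=
  r + (Num.sqrt (m%:R))^-1 *: \sum_(i < m) alpha i ord0 *: feat S (x i.+1).

End LSTD.

From HB Require Import structures.
From mathcomp Require Import all_boot all_order all_algebra.
From mathcomp Require Import reals ring.
Import Order.TTheory GRing.Theory Num.Theory.
Local Open Scope ring_scope.
Set Implicit Arguments. Unset Strict Implicit. Unset Printing Implicit Defensive.

(* Put u := theta - r, s := sqrt m, let [feat_comb] send a coefficient vector a
   to sum_i a_i K(., x_i), and let [td_coef u] be the coefficient vector of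
   (Sigma_cov - Sigma_cr) u in the features K(., x_i). The LSTD equation then
   reads  lam u + feat_comb (td_coef u) = s^-1 feat_comb y.  As lam != 0, any
   solution u lies in the span of the features, u = s^-1 feat_comb a, and the
   equation becomes  td_coef (feat_comb a) + lam a = y,  which is the matrix
   system because td_coef (feat_comb a) = (Kcov - Kcr) a. *)

Section RegularizedRepresenter.
Variables (F : fieldType) (V W : lmodType F).
Variables (B : {linear V -> W}) (A : {linear W -> V}) (lam s : F).
Hypotheses (lam_neq0 : lam != 0) (s_neq0 : s != 0).

Lemma regularized_eq_representer (u : W) (y : V) :
  lam *: u + B (A u) = s^-1 *: B y <->
  exists a, A (B a) + lam *: a = y /\ u = s^-1 *: B a.
Proof.
split=> [Eu | [a [<- ->]]]; last first.
  by rewrite !(linearD, linearZ) /= addrC !scalerA mulrC.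
have BAu : B (A u) = s^-1 *: B y - lam *: u by rewrite -Eu addrC addKr.
have sBAu : s *: B (A u) = B y - (s * lam) *: u.
  by rewrite BAu scalerBr !scalerA mulfV // scale1r.
pose a := lam^-1 *: (y - s *: A u).
have Ba : B a = s *: u.
  rewrite linearZ /= linearB /= linearZ /= sBAu opprB addrC subrK.
  by rewrite scalerA mulrCA mulVf // mulr1.
exists a; split; last by rewrite Ba scalerA mulVf // scale1r.
by rewrite Ba linearZ /= scalerA mulfV // scale1r addrC subrK.
Qed.

End RegularizedRepresenter.

Section InnerProduct.
Variables (R : realType) (X : Type) (H : lmodType R) (S : rkhs R X H).

Lemma ip_bilinear : bilinear_for *%R *%R (ip S).
Proof.
split=> [g a f h | f a g h]; first by rewrite ip_linear.
by rewrite !(ip_sym S f) ip_linear.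
Qed.

HB.instance Definition _ := bilinear_isBilinear.Build R H H R _ _ (ip S) ip_bilinear.

End InnerProduct.

Section LSTDRepresentation.
Variables (R : realType) (X : Type) (H : lmodType R) (S : rkhs R X H).
Variables (gamma : R) (K : nat) (w : nat -> R) (x : nat -> X) (m : nat).

Definition feat_comb (a : 'cV[R]_m) : H := \sum_(i < m) a i ord0 *: feat S (x i.+1).

Lemma feat_comb_linear : linear feat_comb.
Proof.
move=> c a b; rewrite /feat_comb scaler_sumr -big_split; apply: eq_bigr => i _.
by rewrite !mxE scalerDl scalerA.
Qed.

HB.instance Definition _ := GRing.isLinear.Build R _ _ _ feat_comb feat_comb_linear.

Definition discounted_feat (t : nat) : H :=
  \sum_(1 <= k < K.+1) (w k * gamma ^+ k) *: feat S (x (t + k)%N).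

Lemma ip_discounted_feat t g : ip S (discounted_feat t) g =
  \sum_(1 <= k < K.+1) w k * gamma ^+ k * ip S (feat S (x (t + k)%N)) g.
Proof. by rewrite linear_sumlz; apply: eq_bigr => k _; rewrite linearZl. Qed.

Definition td_coef (u : H) : 'cV[R]_m := \col_(i < m)
  (m%:R^-1 * (ip S (feat S (x i.+1)) u - ip S (discounted_feat i.+1) u)).

Lemma td_coef_linear : linear td_coef.
Proof.
by move=> c u v; apply/colP => i; rewrite !mxE !linearPr /=; ring.
Qed.

HB.instance Definition _ := GRing.isLinear.Build R _ _ _ td_coef td_coef_linear.

Lemma Sigma_cov_sub_cr u :
  Sigma_cov S x m u - Sigma_cr S gamma K w x m u = feat_comb (td_coef u).
Proof.
rewrite /Sigma_cov /Sigma_cr /tens -scalerBr -sumrB big_add1 big_mkord scaler_sumr.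
by apply: eq_bigr => i _; rewrite mxE -scalerBl scalerA.
Qed.

Lemma Kcov_sub_Kcr_mul a :
  (Kcov S x m - Kcr S gamma K w x m) *m a = td_coef (feat_comb a).
Proof.
apply/colP => i; rewrite !mxE !linear_sumr -sumrB mulr_sumr; apply: eq_bigr => j _.
rewrite !mxE !linearZr /= ip_discounted_feat /kern; ring.
Qed.

Lemma lstd_mx_mulE lam a :
  (Kcov S x m + lam%:M - Kcr S gamma K w x m) *m a = td_coef (feat_comb a) + lam *: a.
Proof. by rewrite addrAC mulmxDl Kcov_sub_Kcr_mul mul_scalar_mx. Qed.

(* [y0] sums [l < k] while [yvec] sums [l <= k]: the missing [l = k] terms
   come from [Sigma_cr r] by the reproducing property. *)
Lemma y0_add_Sigma_cr r :
  y0 S gamma K w x m r + Sigma_cr S gamma K w x m r =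
  (Num.sqrt m%:R)^-1 *: feat_comb (yvec S gamma K w x m r).
Proof.
rewrite /y0 /Sigma_cr /tens -scalerDr -big_split big_add1 big_mkord !scaler_sumr.
apply: eq_bigr => i _ /=; rewrite -scalerDl !scalerA mxE mulrA -invfM -expr2.
rewrite sqr_sqrtr ?ler0n //; congr (_ * _ *: _).
rewrite -/(discounted_feat _) ip_discounted_feat -big_split /=.
apply: eq_big_nat => k /andP[k_ge1 _]; rewrite big_nat_recr //= reproducing; ring.
Qed.

Lemma repr_formE r a :
  repr_form S x r a = r + (Num.sqrt m%:R)^-1 *: feat_comb a.
Proof. by []. Qed.

Lemma lstd_eqE lam r theta :
  lstd_eq S gamma K w x m lam r theta <->
  lam *: (theta - r) + feat_comb (td_coef (theta - r)) =
  y0 S gamma K w x m r + Sigma_cr S gamma K w x m r.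
Proof.
have lhsE u : Sigma_cov S x m u + lam *: u - Sigma_cr S gamma K w x m u =
             lam *: u + feat_comb (td_coef u).
  by rewrite addrAC -Sigma_cov_sub_cr addrC.
have rhsE : Sigma_cov S x m r + lam *: r + y0 S gamma K w x m r =
    y0 S gamma K w x m r + Sigma_cr S gamma K w x m r + (lam *: r + feat_comb (td_coef r)).
  by rewrite -lhsE [RHS]addrC addrA (addrAC _ (- _)) subrK.
by rewrite /lstd_eq !(rwP eqP) -subr_eq lhsE rhsE -subr_eq opprD addrACA -scalerBr -!linearB.
Qed.

End LSTDRepresentation.

Theorem lemma6 (R : realType) (X : Type) (H : lmodType R) (S : rkhs R X H)
  (gamma : R) (K : nat) (w : nat -> R) (n : nat) (x : nat -> X)
  (lam : R) (r : H) :
  0 <= gamma -> gamma < 1 -> (1 <= K)%N ->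
  (forall k, (1 <= k <= K)%N -> 0 <= w k) ->
  \sum_(1 <= k < K.+1) w k = 1 ->
  (K < n)%N -> 0 < lam ->
  forall theta : H,
    lstd_eq S gamma K w x (n - K)%N lam r theta <->
    exists alpha : 'cV[R]_(n - K)%N,
      (Kcov S x (n - K)%N + lam%:M - Kcr S gamma K w x (n - K)%N) *m alpha
        = yvec S gamma K w x (n - K)%N r
      /\ theta = @repr_form R X H S x (n - K)%N r alpha.
Proof.
move=> _ _ _ _ _ lt_Kn lam_gt0 theta.
have : (0 < n - K)%N by rewrite subn_gt0.
move: (n - K)%N => m m_gt0.
have lam_neq0 : lam != 0 by rewrite gt_eqF.
have sqrt_neq0 : Num.sqrt (m%:R : R) != 0 by rewrite gt_eqF // sqrtr_gt0 ltr0n.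
rewrite lstd_eqE y0_add_Sigma_cr regularized_eq_representer //.
split=> -[a [Ea Eu]]; exists a.
  by rewrite lstd_mx_mulE repr_formE -Eu subrKC.
by rewrite -lstd_mx_mulE Eu repr_formE (addrC r) addrK.
Qed.
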